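(* Let $(\mathbb{C},P)$ be an extensional, cauchy-complete tripos with full comprehensions and strong power objects. Then $(\mathbb{C},P)$ has effective quotients. Explicitly, for an equivalence relation $\rho$ on $A$, the quotient $A/\rho$ may be taken to be the domain of the comprehension $\lfloor\sigma\rfloor$ of $\sigma=\exists_{\pi_2}\big(\in_A\wedge\forall_{\langle\pi_1,\pi_3\rangle}(\langle\pi_1,\pi_2\rangle^*\rho\leftrightarrow\langle\pi_2,\pi_3\rangle^*\in_A)\big)\in P(\mathbb{P}A)$ (a formula expressing that an element of $\mathbb{P}A$ is the $\rho$-class of some element of $A$).
   Context: A tripos $(\mathbb{C},P)$: $\mathbb{C}$ non-empty with binary products, $P:\mathbb{C}^{op}\to$ Heyting algebras, reindexings $f^*$ Heyting homomorphisms with left adjoints $\exists_f$ (Beck–Chevalley, Frobenius) and right adjoints $\forall_f$ (Beck–Chevalley), and weak power objects ($\mathbb{P}X$, $\in_X\in P(X\times\mathbb{P}X)$ with every $\gamma\in P(X\times Y)$ of the form $(id_X\times\{\gamma\})^*\in_X$). $\delta_A=\exists_{\langle id,id\rangle}\top_A$. Strong power objects: every $A$ has a weak power object $\mathbb{P}A$ with $\delta_{\mathbb{P}A}=\forall_{\langle\pi_2,\pi_3\rangle}(\langle\pi_1,\pi_2\rangle^*\in_A\leftrightarrow\langle\pi_1,\pi_3\rangle^*\in_A)$. Extensional: $f=g$ iff $\top\le\langle f,g\rangle^*\delta$. Cauchy-complete: every $F\in P(Y\times A)$ with $\top_Y\le\exists_{\pi_1}F$ and $\langle\pi_1,\pi_2\rangle^*F\wedge\langle\pi_1,\pi_3\rangle^*F\le\langle\pi_2,\pi_3\rangle^*\delta_A$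 equals $(f\times id_A)^*\delta_A$ for some $f:Y\to A$. Full comprehension of $\alpha\in P(A)$: $\lfloor\alpha\rfloor:X\to A$ with $\lfloor\alpha\rfloor^*\alpha=\top$, universal among $f$ with $f^*\alpha=\top$, and $\lfloor\alpha\rfloor^*\alpha\le\lfloor\alpha\rfloor^*\beta$ iff $\alpha\le\beta$. Equivalence relation on $A$: $\rho\in P(A\times A)$, $\delta_A\le\rho$, symmetric and transitive internally. Effective quotient: $q:A\to A/\rho$ with $\rho=(q\times q)^*\delta_{A/\rho}$, universal among $f:A\to Y$ with $\rho\le(f\times f)^*\delta_Y$. *)

Set Implicit Arguments.
Unset Strict Implicit.

Record PCat := {
  Ob : Type;
  Hom : Ob -> Ob -> Type;
  idm : forall A, Hom A A;
  comp : forall A B C, Hom B C -> Hom A B -> Hom A C;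
  comp_id_l : forall A B (f : Hom A B), comp (idm B) f = f;
  comp_id_r : forall A B (f : Hom A B), comp f (idm A) = f;
  comp_assoc : forall A B C D (f : Hom A B) (g : Hom B C) (h : Hom C D),
      comp h (comp g f) = comp (comp h g) f;
  prod : Ob -> Ob -> Ob;
  p1 : forall A B, Hom (prod A B) A;
  p2 : forall A B, Hom (prod A B) B;
  pair : forall X A B, Hom X A -> Hom X B -> Hom X (prod A B);
  pair_p1 : forall X A B (f : Hom X A) (g : Hom X B), comp (p1 A B) (pair f g) = f;
  pair_p2 : forall X A B (f : Hom X A) (g : Hom X B), comp (p2 A B) (pair f g) = g;
  pair_uniq : forall X A B (f : Hom X A) (g : Hom X B) (h : Hom X (prod A B)),
      comp (p1 A B) h = f -> comp (p2 A B) h = g -> h = pair f g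
}.

Arguments Hom p : clear implicits.
Arguments idm {p} A : rename.
Arguments comp {p A B C} g f : rename.
Arguments prod {p} A B : rename.
Arguments p1 {p A B} : rename.
Arguments p2 {p A B} : rename.
Arguments pair {p X A B} f g : rename.

Section CatDefs.
Context {C : PCat}.

Definition fx {A B A' B' : Ob C} (f : Hom C A A') (g : Hom C B B')
  : Hom C (prod A B) (prod A' B') := pair (comp f p1) (comp g p2).

Definition pi1 {X Y Z : Ob C} : Hom C (prod (prod X Y) Z) X := comp p1 p1.
Definition pi2 {X Y Z : Ob C} : Hom C (prod (prod X Y) Z) Y := comp p2 p1.
Definition pi3 {X Y Z : Ob C} : Hom C (prod (prod X Y) Z) Z := p2.

Definition is_pullback {A B D E : Ob C} (f : Hom C A B) (g : Hom C D B)
    (p : Hom C E A) (q : Hom C E D) : Prop :=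
  comp f p = comp g q /\
  forall (W : Ob C) (u : Hom C W A) (v : Hom C W D), comp f u = comp g v ->
    exists! w : Hom C W E, comp p w = u /\ comp q w = v.
End CatDefs.

Record HA := {
  car :> Type;
  le : car -> car -> Prop;
  top : car; bot : car;
  meet : car -> car -> car; join : car -> car -> car; imp : car -> car -> car;
  le_refl : forall a, le a a;
  le_trans : forall a b c, le a b -> le b c -> le a c;
  le_antisym : forall a b, le a b -> le b a -> a = b;
  top_max : forall a, le a top;
  bot_min : forall a, le bot a;
  meet_glb : forall a b c, le c (meet a b) <-> (le c a /\ le c b);
  join_lub : forall a b c, le (join a b) c <-> (le a c /\ le b c);
  imp_adj : forall a b c, le c (imp a b) <-> le (meet c a) b
}.
Arguments le {h} a b.
Arguments top {h}.
Arguments bot {h}.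
Arguments meet {h} a b.
Arguments join {h} a b.
Arguments imp {h} a b.

Definition biimp {H : HA} (a b : H) : H := meet (imp a b) (imp b a).

Record TriposData (C : PCat) := {
  P : Ob C -> HA;
  rdx : forall A B : Ob C, Hom C A B -> P B -> P A;
  ex : forall A B : Ob C, Hom C A B -> P A -> P B;
  all : forall A B : Ob C, Hom C A B -> P A -> P B
}.
Arguments P {C} t A.
Arguments rdx {C t A B} f phi.
Arguments ex {C t A B} f phi.
Arguments all {C t A B} f phi.

Section TriposDefs.
Context {C : PCat} {T : TriposData C}.

Definition is_weak_power (X PX : Ob C) (inX : P T (prod X PX)) : Prop :=
  forall (Y : Ob C) (g : P T (prod X Y)), exists c : Hom C Y PX,
    g = rdx (fx (idm X) c) inX.

Record is_tripos : Prop := {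
  nonempty : inhabited (Ob C);
  rdx_id : forall A (phi : P T A), rdx (idm A) phi = phi;
  rdx_comp : forall A B D (f : Hom C A B) (g : Hom C B D) (phi : P T D),
      rdx (comp g f) phi = rdx f (rdx g phi);
  rdx_top : forall A B (f : Hom C A B), rdx f (@top (P T B)) = top;
  rdx_bot : forall A B (f : Hom C A B), rdx f (@bot (P T B)) = bot;
  rdx_meet : forall A B (f : Hom C A B) (a b : P T B), rdx f (meet a b) = meet (rdx f a) (rdx f b);
  rdx_join : forall A B (f : Hom C A B) (a b : P T B), rdx f (join a b) = join (rdx f a) (rdx f b);
  rdx_imp : forall A B (f : Hom C A B) (a b : P T B), rdx f (imp a b) = imp (rdx f a) (rdx f b);
  ex_adj : forall A B (f : Hom C A B) (a : P T A) (b : P T B), le (ex f a) b <-> le a (rdx f b);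
  all_adj : forall A B (f : Hom C A B) (a : P T A) (b : P T B), le (rdx f b) a <-> le b (all f a);
  frobenius : forall A B (f : Hom C A B) (a : P T A) (b : P T B),
      ex f (meet a (rdx f b)) = meet (ex f a) b;
  bc_ex : forall A B D E (f : Hom C A B) (g : Hom C D B) (p : Hom C E A) (q : Hom C E D),
      is_pullback f g p q -> forall a : P T A, rdx g (ex f a) = ex q (rdx p a);
  bc_all : forall A B D E (f : Hom C A B) (g : Hom C D B) (p : Hom C E A) (q : Hom C E D),
      is_pullback f g p q -> forall a : P T A, rdx g (all f a) = all q (rdx p a);
  weak_powers : forall X : Ob C, exists (PX : Ob C) (inX : P T (prod X PX)), is_weak_power inX
}.

Definition delta (A : Ob C) : P T (prod A A) := ex (pair (idm A) (idm A)) top.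

Definition is_strong_power (X PX : Ob C) (inX : P T (prod X PX)) : Prop :=
  is_weak_power inX /\
  delta PX = all (pair (@pi2 C X PX PX) pi3)
                 (biimp (rdx (pair (@pi1 C X PX PX) pi2) inX) (rdx (pair (@pi1 C X PX PX) pi3) inX)).

Definition has_strong_power_objects : Prop :=
  forall A : Ob C, exists (PA : Ob C) (inA : P T (prod A PA)), is_strong_power inA.

Definition extensional : Prop :=
  forall (X A : Ob C) (f g : Hom C X A), f = g <-> le top (rdx (pair f g) (delta A)).

Definition cauchy_complete : Prop :=
  forall (Y A : Ob C) (F : P T (prod Y A)),
    le top (ex p1 F) ->
    le (meet (rdx (pair (@pi1 C Y A A) pi2) F) (rdx (pair (@pi1 C Y A A) pi3) F))
       (rdx (pair (@pi2 C Y A A) pi3) (delta A)) ->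
    exists f : Hom C Y A, F = rdx (fx f (idm A)) (delta A).

Definition is_full_comprehension (A : Ob C) (alpha : P T A) (X : Ob C) (m : Hom C X A) : Prop :=
  rdx m alpha = top /\
  (forall (Y : Ob C) (f : Hom C Y A), rdx f alpha = top ->
     exists! g : Hom C Y X, comp m g = f) /\
  (forall beta : P T A, le (rdx m alpha) (rdx m beta) <-> le alpha beta).

Definition has_full_comprehensions : Prop :=
  forall (A : Ob C) (alpha : P T A), exists (X : Ob C) (m : Hom C X A),
    is_full_comprehension alpha m.

Definition equiv_rel (A : Ob C) (rho : P T (prod A A)) : Prop :=
  le (delta A) rho /\
  le rho (rdx (pair p2 p1) rho) /\
  le (meet (rdx (pair (@pi1 C A A A) pi2) rho) (rdx (pair (@pi2 C A A A) pi3) rho))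
     (rdx (pair (@pi1 C A A A) pi3) rho).

Definition is_effective_quotient (A : Ob C) (rho : P T (prod A A)) (Q : Ob C) (q : Hom C A Q) : Prop :=
  rho = rdx (fx q q) (delta Q) /\
  forall (Y : Ob C) (f : Hom C A Y), le rho (rdx (fx f f) (delta Y)) ->
    exists! g : Hom C Q Y, comp g q = f.

Definition has_effective_quotients : Prop :=
  forall (A : Ob C) (rho : P T (prod A A)), equiv_rel rho ->
    exists (Q : Ob C) (q : Hom C A Q), is_effective_quotient rho q.

Definition class_pred (A PA : Ob C) (inA : P T (prod A PA)) (rho : P T (prod A A)) : P T PA :=
  ex (@p2 C A PA)
     (meet inA
        (all (pair (@pi1 C A A PA) pi3)
             (biimp (rdx (pair (@pi1 C A A PA) pi2) rho) (rdx (pair (@pi2 C A A PA) pi3) inA)))).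

End TriposDefs.
Arguments is_tripos {C} T.
Arguments extensional {C} T.
Arguments cauchy_complete {C} T.
Arguments has_full_comprehensions {C} T.
Arguments has_strong_power_objects {C} T.
Arguments has_effective_quotients {C} T.

(* We reason in the internal logic through generalized elements: a predicate
   phi in P(Z) "holds at" h : V -> Z when top <= h^* phi.  Full comprehensions
   make predicates determined by the generalized elements at which they hold,
   so the tripos connectives and quantifiers obey the usual natural-deduction
   rules at generalized elements (quantifiers along product projections, via
   Beck-Chevalley on explicit pullbacks), and extensionality turns internal
   equality at generalized elements into equality of morphisms.

   Given an equivalence relation rho on A, a weak power object gives a map
   c : A -> PA classifying rho, i.e. c(a) is the rho-class of a.  The predicate
   sigma = class_pred on PA says "U is the class of some a"; c factors through
   its comprehension m : X >-> PA as c = m q.  Strong power objects make c(a)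
   the unique class of a, which yields the kernel equation rho = (q x q)^* delta.
   For f : A -> Y respecting rho, the relation {(q a, f a)} on X x Y is total
   and functional, so Cauchy completeness turns it into the graph of the
   factorization g : X -> Y; uniqueness of g follows since q is surjective
   in the internal logic. *)

From Stdlib Require Import Setoid.

Section Products.
Context {C : PCat}.

Lemma comp_pair {X Y A B : Ob C} (f : Hom C Y A) (g : Hom C Y B) (h : Hom C X Y) :
  comp (pair f g) h = pair (comp f h) (comp g h).
Proof. apply pair_uniq; rewrite comp_assoc; [rewrite pair_p1 | rewrite pair_p2]; reflexivity. Qed.

Lemma pair_eta {X A B : Ob C} (h : Hom C X (prod A B)) : pair (comp p1 h) (comp p2 h) = h.
Proof. symmetry; apply pair_uniq; reflexivity. Qed.

Lemma pair_ext {X A B : Ob C} (h h' : Hom C X (prod A B)) :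
  comp p1 h = comp p1 h' -> comp p2 h = comp p2 h' -> h = h'.
Proof. intros E1 E2. rewrite <- (pair_eta h'). apply pair_uniq; assumption. Qed.

Lemma triple_eta {V A B D : Ob C} (e : Hom C V (prod (prod A B) D)) :
  pair (pair (comp p1 (comp p1 e)) (comp p2 (comp p1 e))) (comp p2 e) = e.
Proof. rewrite !pair_eta. reflexivity. Qed.
End Products.

Ltac cat_simpl := unfold fx, pi1, pi2, pi3 in *;
  repeat progress (rewrite <- ?comp_assoc, ?pair_p1, ?pair_p2, ?comp_pair, ?comp_id_l,
                     ?comp_id_r, ?pair_eta).
Ltac cat_simpl_in H := unfold fx, pi1, pi2, pi3 in H;
  repeat progress (rewrite <- ?comp_assoc, ?pair_p1, ?pair_p2, ?comp_pair, ?comp_id_l,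
                     ?comp_id_r, ?pair_eta in H).
Ltac cat_eq := cat_simpl; repeat (apply pair_ext; cat_simpl); try reflexivity; try solve [auto].

Section Pullbacks.
Context {C : PCat}.

(* pi can be pulled back along every morphism into its codomain; this is what
   lets Beck-Chevalley compute quantifiers along pi at generalized elements. *)
Definition has_pullbacks_along {E Z : Ob C} (pi : Hom C E Z) : Prop :=
  forall (W : Ob C) (f : Hom C W Z), exists (E' : Ob C) (p' : Hom C E' E) (q' : Hom C E' W),
    is_pullback pi f p' q'.

Lemma p2_pullbacks (B Z : Ob C) : has_pullbacks_along (@p2 C B Z).
Proof.
  intros W f. exists (prod B W), (pair p1 (comp f p2)), p2. split.
  - cat_eq.
  - intros W' u v Huv. exists (pair (comp p1 u) v). split.
    + split; [cat_eq; rewrite Huv; reflexivity | cat_eq].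
    + intros w [E1 E2]. apply pair_ext; cat_simpl; [rewrite <- E1; cat_eq | auto].
Qed.

Lemma pi13_pullbacks (A A' B : Ob C) : has_pullbacks_along (pair (@pi1 C A A' B) pi3).
Proof.
  intros W f.
  exists (prod W A'), (pair (pair (comp p1 (comp f p1)) p2) (comp p2 (comp f p1))), p1. split.
  - cat_eq.
  - intros W' u v Huv.
    assert (E1 := f_equal (comp p1) Huv). assert (E2 := f_equal (comp p2) Huv).
    cat_simpl_in E1; cat_simpl_in E2.
    exists (pair v (comp pi2 u)). split.
    + split; cat_eq; congruence.
    + intros w [F1 F2]. apply pair_ext; cat_simpl; [auto |]. rewrite <- F1. cat_eq.
Qed.

Lemma pi23_pullbacks (A' A B : Ob C) : has_pullbacks_along (pair (@pi2 C A' A B) pi3).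
Proof.
  intros W f.
  exists (prod W A'), (pair (pair p2 (comp p1 (comp f p1))) (comp p2 (comp f p1))), p1. split.
  - cat_eq.
  - intros W' u v Huv.
    assert (E1 := f_equal (comp p1) Huv). assert (E2 := f_equal (comp p2) Huv).
    cat_simpl_in E1; cat_simpl_in E2.
    exists (pair v (comp pi1 u)). split.
    + split; cat_eq; congruence.
    + intros w [F1 F2]. apply pair_ext; cat_simpl; [auto |]. rewrite <- F1. cat_eq.
Qed.
End Pullbacks.

Section HeytingFacts.
Context {H : HA}.

Lemma meet_l (a b : H) : le (meet a b) a.
Proof. apply (proj1 (proj1 (meet_glb a b (meet a b)) (le_refl _))). Qed.

Lemma meet_r (a b : H) : le (meet a b) b.
Proof. apply (proj2 (proj1 (meet_glb a b (meet a b)) (le_refl _))). Qed.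
End HeytingFacts.

Section InternalLogic.
Context {C : PCat} {T : TriposData C} (HT : is_tripos T).

Definition holds {W Z : Ob C} (f : Hom C W Z) (phi : P T Z) : Prop := le top (rdx f phi).

Lemma rdx_mono {W Z} (f : Hom C W Z) (a b : P T Z) : le a b -> le (rdx f a) (rdx f b).
Proof.
  intro Hab. assert (E : meet a b = a).
  { apply le_antisym; [apply meet_l |]. apply meet_glb; split; [apply le_refl | exact Hab]. }
  rewrite <- E, (rdx_meet HT). apply meet_r.
Qed.

Lemma holds_rdx {V W Z} (h : Hom C V W) (g : Hom C W Z) phi :
  holds h (rdx g phi) <-> holds (comp g h) phi.
Proof. unfold holds; rewrite (rdx_comp HT); tauto. Qed.

Lemma holds_comp {V W Z} (f : Hom C W Z) (h : Hom C V W) phi :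
  holds f phi -> holds (comp f h) phi.
Proof. unfold holds; intro Hf; rewrite (rdx_comp HT), <- (rdx_top HT h). now apply rdx_mono. Qed.

Lemma holds_mono {W Z} (f : Hom C W Z) (a b : P T Z) : le a b -> holds f a -> holds f b.
Proof. unfold holds; intros Hab Ha. eapply le_trans; [exact Ha |]. now apply rdx_mono. Qed.

Lemma holds_meet {W Z} (f : Hom C W Z) a b : holds f (meet a b) <-> holds f a /\ holds f b.
Proof. unfold holds; rewrite (rdx_meet HT). apply meet_glb. Qed.

Lemma holds_top_eq {W Z} (f : Hom C W Z) phi : holds f phi <-> rdx f phi = top.
Proof.
  unfold holds; split; intro Hf; [apply le_antisym; [apply top_max | exact Hf] |].
  rewrite Hf; apply le_refl.
Qed.

Lemma holds_ex_intro {V E Z} (pi : Hom C E Z) (e : Hom C V E) phi :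
  holds e phi -> holds (comp pi e) (ex pi phi).
Proof. intro He. apply holds_rdx. eapply holds_mono; [| exact He]. apply (ex_adj HT), le_refl. Qed.

Lemma holds_all_elim {V W E Z} (pi : Hom C E Z) (f : Hom C W Z) (h : Hom C V W) (e : Hom C V E) phi :
  holds f (all pi phi) -> comp pi e = comp f h -> holds e phi.
Proof.
  intros Hf Heq. apply (holds_comp f h) in Hf. rewrite <- Heq in Hf. apply holds_rdx in Hf.
  eapply holds_mono; [| exact Hf]. apply (all_adj HT), le_refl.
Qed.

Lemma holds_all_intro {W E Z} (pi : Hom C E Z) (f : Hom C W Z) phi : has_pullbacks_along pi ->
  (forall V (h : Hom C V W) (e : Hom C V E), comp pi e = comp f h -> holds e phi) ->
  holds f (all pi phi).
Proof.
  intros Hpb Hphi. destruct (Hpb W f) as [E' [p' [q' Hp]]].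
  unfold holds. rewrite (bc_all HT Hp). apply (all_adj HT). rewrite (rdx_top HT).
  apply Hphi with (h := q'). apply Hp.
Qed.

Lemma holds_ex_p2_intro {V B Z} (b : Hom C V B) (z : Hom C V Z) (phi : P T (prod B Z)) :
  holds (pair b z) phi -> holds z (ex p2 phi).
Proof. intro Hbz. rewrite <- (pair_p2 b z). now apply holds_ex_intro. Qed.

Lemma holds_all_pi13_elim {V A A' B} (a : Hom C V A) (a' : Hom C V A') (u : Hom C V B) phi :
  holds (pair a u) (all (pair (@pi1 C A A' B) pi3) phi) -> holds (pair (pair a a') u) phi.
Proof. intro Hau. apply (holds_all_elim _ _ (idm V) _ _ Hau). cat_eq. Qed.

Lemma holds_all_pi13_intro {W A A' B} (a : Hom C W A) (u : Hom C W B) phi :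
  (forall V (h : Hom C V W) (a' : Hom C V A'), holds (pair (pair (comp a h) a') (comp u h)) phi) ->
  holds (pair a u) (all (pair (@pi1 C A A' B) pi3) phi).
Proof.
  intro Hphi. apply (holds_all_intro _ _ _ (pi13_pullbacks A A' B)). intros V h e Heq.
  assert (E1 := f_equal (comp p1) Heq). assert (E2 := f_equal (comp p2) Heq).
  cat_simpl_in E1; cat_simpl_in E2.
  rewrite <- (triple_eta e), E1, E2. apply Hphi.
Qed.

Lemma holds_all_pi23_intro {W A' A B} (a : Hom C W A) (u : Hom C W B) phi :
  (forall V (h : Hom C V W) (a' : Hom C V A'), holds (pair (pair a' (comp a h)) (comp u h)) phi) ->
  holds (pair a u) (all (pair (@pi2 C A' A B) pi3) phi).
Proof.
  intro Hphi. apply (holds_all_intro _ _ _ (pi23_pullbacks A' A B)). intros V h e Heq.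
  assert (E1 := f_equal (comp p1) Heq). assert (E2 := f_equal (comp p2) Heq).
  cat_simpl_in E1; cat_simpl_in E2.
  rewrite <- (triple_eta e), E1, E2. apply Hphi.
Qed.

(* Rules for the biimplication; introduction is local, hence needs the
   generalized-element test below. *)
Lemma holds_biimp_elim {W Z} (f : Hom C W Z) a b : holds f (biimp a b) -> (holds f a <-> holds f b).
Proof.
  unfold biimp; intro Hf; apply holds_meet in Hf; destruct Hf as [Hab Hba]; unfold holds in *;
    rewrite (rdx_imp HT) in Hab, Hba; apply imp_adj in Hab; apply imp_adj in Hba;
    split; intro Hx; [eapply le_trans; [| exact Hab] | eapply le_trans; [| exact Hba]];
    apply meet_glb; split; auto; apply le_refl.
Qed.

Lemma comprehension_mono {A X} (alpha : P T A) (m : Hom C X A) :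
  is_full_comprehension alpha m ->
  forall V (g1 g2 : Hom C V X), comp m g1 = comp m g2 -> g1 = g2.
Proof.
  intros [Hm1 [Hm2 _]] V g1 g2 E.
  assert (Htop : rdx (comp m g1) alpha = top).
  { rewrite (rdx_comp HT), Hm1. apply (rdx_top HT). }
  destruct (Hm2 _ _ Htop) as [g [_ Hg]].
  rewrite <- (Hg g1 eq_refl). apply Hg. symmetry; exact E.
Qed.

Hypothesis Hfc : has_full_comprehensions T.

(* With full comprehensions, entailment is checked on generalized elements:
   test psi at the comprehension of phi. *)
Lemma le_of_holds {Z} (phi psi : P T Z) :
  (forall V (h : Hom C V Z), holds h phi -> holds h psi) -> le phi psi.
Proof.
  intro Himp. destruct (Hfc _ phi) as [X [m [Hm1 [_ Hm3]]]].
  apply Hm3. rewrite Hm1. apply Himp. unfold holds; rewrite Hm1; apply le_refl.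
Qed.

Lemma le_of_holds_pair {A B} (phi psi : P T (prod A B)) :
  (forall V (a : Hom C V A) (b : Hom C V B), holds (pair a b) phi -> holds (pair a b) psi) ->
  le phi psi.
Proof.
  intro Himp. apply le_of_holds. intros V h. rewrite <- (pair_eta h). apply Himp.
Qed.

Lemma le_of_holds_triple {A B D} (phi psi : P T (prod (prod A B) D)) :
  (forall V (a : Hom C V A) (b : Hom C V B) (d : Hom C V D),
     holds (pair (pair a b) d) phi -> holds (pair (pair a b) d) psi) ->
  le phi psi.
Proof.
  intro Himp. apply le_of_holds. intros V h. rewrite <- (triple_eta h). apply Himp.
Qed.

Lemma holds_biimp_intro {W Z} (f : Hom C W Z) a b :
  (forall V (h : Hom C V W), holds (comp f h) a <-> holds (comp f h) b) -> holds f (biimp a b).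
Proof.
  intro Hab. unfold biimp. apply holds_meet; split; unfold holds; rewrite (rdx_imp HT);
    apply imp_adj; eapply le_trans; try apply meet_r;
    apply le_of_holds; intros V h; rewrite !holds_rdx; apply Hab.
Qed.

Lemma holds_ex_p2_elim {W B Z} (z : Hom C W Z) (phi : P T (prod B Z)) (psi : P T W) :
  holds z (ex p2 phi) ->
  (forall V (h : Hom C V W) (b : Hom C V B), holds (pair b (comp z h)) phi -> holds h psi) ->
  le top psi.
Proof.
  intros Hz Hpsi. destruct (p2_pullbacks B Z W z) as [E' [p' [q' Hp]]].
  unfold holds in Hz. rewrite (bc_ex HT Hp) in Hz. eapply le_trans; [exact Hz |].
  apply (ex_adj HT). apply le_of_holds. intros V u Hu.
  apply holds_rdx. apply holds_rdx in Hu.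
  apply (Hpsi _ _ (comp p1 (comp p' u))).
  rewrite <- (pair_eta (comp p' u)) in Hu.
  replace (comp z (comp q' u)) with (comp p2 (comp p' u)); [exact Hu |].
  rewrite !comp_assoc. f_equal. apply Hp.
Qed.
End InternalLogic.

Section Quotient.
Context {C : PCat} {T : TriposData C} (HT : is_tripos T).
Hypothesis Hext : extensional T.
Hypothesis Hfc : has_full_comprehensions T.

Local Notation holds := (@holds C T).

Lemma holds_delta {W Z : Ob C} (u v : Hom C W Z) : u = v <-> holds (pair u v) (delta Z).
Proof. apply Hext. Qed.

Variables (A : Ob C) (rho : P T (prod A A)) (Hrho : equiv_rel rho).
Variables (PA : Ob C) (inA : P T (prod A PA)) (Hpow : is_strong_power inA).

Lemma rho_refl {V} (u : Hom C V A) : holds (pair u u) rho.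
Proof. eapply (holds_mono HT); [apply (proj1 Hrho) |]. apply holds_delta; reflexivity. Qed.

Lemma rho_sym {V} (u v : Hom C V A) : holds (pair u v) rho -> holds (pair v u) rho.
Proof.
  intro Huv. eapply (holds_mono HT) in Huv; [| apply (proj1 (proj2 Hrho))].
  apply (holds_rdx HT) in Huv. revert Huv. cat_eq.
Qed.

Lemma rho_trans {V} (u v w : Hom C V A) :
  holds (pair u v) rho -> holds (pair v w) rho -> holds (pair u w) rho.
Proof.
  intros Huv Hvw.
  assert (Huvw : holds (pair (pair u v) w)
    (meet (rdx (pair (@pi1 C A A A) pi2) rho) (rdx (pair (@pi2 C A A A) pi3) rho))).
  { apply (holds_meet HT). split; apply (holds_rdx HT); cat_eq; assumption. }
  eapply (holds_mono HT) in Huvw; [| apply (proj2 (proj2 Hrho))].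
  apply (holds_rdx HT) in Huvw. revert Huvw. cat_eq.
Qed.

Lemma power_ext {W} (U U' : Hom C W PA) :
  (forall V (h : Hom C V W) (a : Hom C V A),
     holds (pair a (comp U h)) inA <-> holds (pair a (comp U' h)) inA) -> U = U'.
Proof.
  intro Hmem. apply holds_delta. rewrite (proj2 Hpow). apply (holds_all_pi23_intro HT).
  intros V h a. apply (holds_biimp_intro HT Hfc). intros V' h'.
  rewrite !(holds_rdx HT). cat_simpl. apply Hmem.
Qed.

Definition is_class_of : P T (prod A PA) :=
  meet inA (all (pair (@pi1 C A A PA) pi3)
    (biimp (rdx (pair (@pi1 C A A PA) pi2) rho) (rdx (pair (@pi2 C A A PA) pi3) inA))).

Lemma class_pred_unfold : class_pred inA rho = ex p2 is_class_of.
Proof. reflexivity. Qed.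

Section ClassMap.
Variables (c : Hom C A PA) (Hc : rho = rdx (fx (idm A) c) inA).

Lemma class_map_spec {V} (a b : Hom C V A) : holds (pair a (comp c b)) inA <-> holds (pair a b) rho.
Proof. rewrite Hc, (holds_rdx HT). cat_eq; tauto. Qed.

Lemma is_class_of_unique {V} (a : Hom C V A) (U : Hom C V PA) :
  holds (pair a U) is_class_of -> U = comp c a.
Proof.
  intro Hcls. apply (holds_meet HT) in Hcls. destruct Hcls as [_ Hall].
  apply power_ext. intros V' h x.
  rewrite <- comp_assoc, class_map_spec.
  apply (holds_comp HT _ h) in Hall. rewrite comp_pair in Hall.
  assert (Hx := holds_all_pi13_elim HT (comp a h) x (comp U h) _ Hall).
  apply (holds_biimp_elim HT) in Hx.
  rewrite !(holds_rdx HT) in Hx. revert Hx. cat_simpl. intro Hx.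
  split; intro Hmem; [apply rho_sym, Hx, Hmem | apply Hx, rho_sym, Hmem].
Qed.

Lemma class_map_is_class : holds (pair (idm A) c) is_class_of.
Proof.
  apply (holds_meet HT). split.
  - rewrite <- (comp_id_r c) at 1. apply class_map_spec, rho_refl.
  - apply (holds_all_pi13_intro HT). intros V h x.
    apply (holds_biimp_intro HT Hfc). intros V' h'.
    rewrite !(holds_rdx HT). cat_simpl. rewrite class_map_spec.
    split; apply rho_sym.
Qed.

Lemma class_map_in_sigma : holds c (class_pred inA rho).
Proof. rewrite class_pred_unfold. exact (holds_ex_p2_intro HT _ _ _ class_map_is_class). Qed.

Variables (X : Ob C) (m : Hom C X PA) (Hm : is_full_comprehension (class_pred inA rho) m).
Variables (q : Hom C A X) (Hq : comp m q = c).

(* Internal surjectivity of q: every generalized element of X is locally q(a). *)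
Lemma quotient_elim {W} (x : Hom C W X) (phi : P T W) :
  (forall V (h : Hom C V W) (a : Hom C V A), comp x h = comp q a -> holds h phi) -> le top phi.
Proof.
  intro Hphi.
  assert (Hsig : holds (comp m x) (class_pred inA rho)).
  { apply (holds_comp HT). apply holds_top_eq, Hm. }
  rewrite class_pred_unfold in Hsig.
  apply (holds_ex_p2_elim HT Hfc _ _ _ Hsig). intros V h a Ha.
  apply is_class_of_unique in Ha. apply (Hphi V h a).
  apply (comprehension_mono HT _ _ Hm). rewrite comp_assoc, Ha, <- Hq. symmetry. apply comp_assoc.
Qed.

Lemma quotient_kernel : rho = rdx (fx q q) (delta X).
Proof.
  apply le_antisym; apply (le_of_holds_pair Hfc); intros V a1 a2;
    rewrite ?(holds_rdx HT); cat_simpl; rewrite <- holds_delta.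
  - intro Hrel. apply (comprehension_mono HT _ _ Hm). rewrite !comp_assoc, Hq.
    apply power_ext. intros V' h' a. rewrite <- !comp_assoc, !class_map_spec.
    assert (Hrel' : holds (pair (comp a1 h') (comp a2 h')) rho).
    { rewrite <- comp_pair. apply (holds_comp HT); exact Hrel. }
    split; intro Ha; eauto using rho_trans, rho_sym.
  - intro E. apply class_map_spec. rewrite <- Hq, <- comp_assoc, <- E, comp_assoc, Hq.
    apply class_map_spec, rho_refl.
Qed.

Section Factorization.
Hypothesis Hcc : cauchy_complete T.
Variables (Y : Ob C) (f : Hom C A Y) (Hf : le rho (rdx (fx f f) (delta Y))).

Lemma f_respects_rho {V} (a1 a2 : Hom C V A) : holds (pair a1 a2) rho -> comp f a1 = comp f a2.
Proof.
  intro Hrel. eapply (holds_mono HT) in Hrel; [| exact Hf]. apply (holds_rdx HT) in Hrel.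
  apply holds_delta. revert Hrel. cat_simpl. auto.
Qed.

Lemma quotient_epi (g1 g2 : Hom C X Y) : comp g1 q = f -> comp g2 q = f -> g1 = g2.
Proof.
  intros G1 G2. apply holds_delta. apply (quotient_elim (idm X)).
  intros V h a E. rewrite comp_id_l in E. apply (holds_rdx HT). cat_simpl.
  apply holds_delta. rewrite E, !comp_assoc, G1, G2. reflexivity.
Qed.

Definition image_rel : P T (prod X Y) :=
  ex (@p2 C A (prod X Y)) (rdx (pair (pair (comp q p1) (comp f p1)) p2) (delta (prod X Y))).

Lemma image_rel_intro {V} (a : Hom C V A) : holds (pair (comp q a) (comp f a)) image_rel.
Proof.
  apply (holds_ex_p2_intro HT a). apply (holds_rdx HT). cat_simpl.
  apply holds_delta. reflexivity.
Qed.

Lemma image_rel_elim {W} (x : Hom C W X) (y : Hom C W Y) (phi : P T W) :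
  holds (pair x y) image_rel ->
  (forall V (h : Hom C V W) (a : Hom C V A), comp x h = comp q a -> comp y h = comp f a -> holds h phi) ->
  le top phi.
Proof.
  intros Hxy Hphi. apply (holds_ex_p2_elim HT Hfc _ _ _ Hxy). intros V h a Ha.
  apply (holds_rdx HT) in Ha. cat_simpl_in Ha. apply holds_delta in Ha.
  assert (E1 := f_equal (comp p1) Ha). assert (E2 := f_equal (comp p2) Ha).
  cat_simpl_in E1; cat_simpl_in E2.
  apply (Hphi V h a); symmetry; assumption.
Qed.

Lemma image_rel_total : le top (ex p1 image_rel).
Proof.
  apply (quotient_elim (idm X)). intros V h a E. rewrite comp_id_l in E. rewrite E.
  rewrite <- (pair_p1 (comp q a) (comp f a)). apply (holds_ex_intro HT), image_rel_intro.
Qed.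

(* Functionality: q a = q a' forces rho(a, a'), hence f a = f a'. *)
Lemma image_rel_functional :
  le (meet (rdx (pair (@pi1 C X Y Y) pi2) image_rel) (rdx (pair (@pi1 C X Y Y) pi3) image_rel))
     (rdx (pair (@pi2 C X Y Y) pi3) (delta Y)).
Proof.
  apply (le_of_holds_triple Hfc). intros V x y1 y2 Hh.
  apply (holds_meet HT) in Hh. destruct Hh as [H1 H2].
  apply (holds_rdx HT) in H1, H2. cat_simpl_in H1. cat_simpl_in H2.
  apply (holds_rdx HT). cat_simpl.
  apply (image_rel_elim _ _ _ H1). intros V' k a E1 E2.
  apply (holds_comp HT _ k) in H2. rewrite comp_pair in H2.
  apply (image_rel_elim _ _ _ H2). intros V'' k' a' E3 E4.
  rewrite !(holds_rdx HT). cat_simpl. apply holds_delta.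
  rewrite !comp_assoc, E2, E4, <- comp_assoc. apply f_respects_rho.
  rewrite quotient_kernel. apply (holds_rdx HT). cat_simpl. apply holds_delta.
  rewrite comp_assoc, <- E1, E3. reflexivity.
Qed.

Lemma quotient_universal : exists! g : Hom C X Y, comp g q = f.
Proof.
  destruct (Hcc _ _ image_rel image_rel_total image_rel_functional) as [g Hg].
  assert (Hgq : comp g q = f).
  { apply holds_delta. assert (Hgr := image_rel_intro (idm A)). rewrite Hg in Hgr.
    apply (holds_rdx HT) in Hgr. revert Hgr. cat_simpl. auto. }
  exists g. split; [exact Hgq |]. intros g' Hg'. exact (quotient_epi g g' Hgq Hg').
Qed.
End Factorization.
End ClassMap.

Lemma class_quotient (Hcc : cauchy_complete T)
    (X : Ob C) (m : Hom C X PA) (Hm : is_full_comprehension (class_pred inA rho) m) :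
  exists q : Hom C A X, is_effective_quotient rho q.
Proof.
  destruct (proj1 Hpow A rho) as [c Hc].
  destruct (proj1 (proj2 Hm) A c (proj1 (holds_top_eq _ _) (class_map_in_sigma c Hc)))
    as [q [Hq _]].
  exists q. split.
  - exact (quotient_kernel c Hc X m Hm q Hq).
  - intros Y f Hf. exact (quotient_universal c Hc X m Hm q Hq Hcc Y f Hf).
Qed.
End Quotient.

Theorem mainTheorem9 (C : PCat) (T : TriposData C) :
  is_tripos T ->
  extensional T -> cauchy_complete T -> has_full_comprehensions T ->
  has_strong_power_objects T ->
  has_effective_quotients T /\
  (forall (A : Ob C) (rho : P T (prod A A)), equiv_rel rho ->
   forall (PA : Ob C) (inA : P T (prod A PA)), is_strong_power inA ->
   forall (X : Ob C) (m : Hom C X PA), is_full_comprehension (class_pred inA rho) m ->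
   exists q : Hom C A X, is_effective_quotient rho q).
Proof.
  intros HT Hext Hcc Hfc Hsp.
  assert (Hclass := fun A rho Hrho PA inA Hpow =>
                      class_quotient HT Hext Hfc A rho Hrho PA inA Hpow Hcc).
  split; [| exact Hclass].
  intros A rho Hrho. destruct (Hsp A) as [PA [inA Hpow]].
  destruct (Hfc _ (class_pred inA rho)) as [X [m Hm]].
  exists X. exact (Hclass A rho Hrho PA inA Hpow X m Hm).
Qed.
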